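(* Let $\Gamma=([n],E)$ be a connected simple graph and $m$ a positive integer. Then the polytopes $$Q_{\Gamma,m}=\sum_{\substack{S\subseteq[n],\,|S|\le m+1\\ \Gamma|_S\text{ connected}}}\Delta_S\qquad\text{and}\qquad Q^L_{\Gamma,m}=\sum_{\substack{S\subseteq[n],\,|S|\le m+1\\ \Gamma|_S\cong L_{|S|}}}\Delta_S$$ are normally equivalent, i.e. their normal fans coincide.
   Context: $L_r$ is the path graph on $r$ vertices and $\Gamma|_S$ is the induced subgraph on $S$; the sums are Minkowski sums over nonempty subsets $S$. For nonempty $S\subseteq[n]$, $\Delta_S=\mathrm{conv}\{e_s:s\in S\}\subset\mathbb{R}^n$, where $e_s$ are the standard basis vectors. *)

From HB Require Import structures.
From mathcomp Require Import all_boot all_order all_algebra.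
From mathcomp Require Import boolp reals.
Set Implicit Arguments. Unset Strict Implicit. Unset Printing Implicit Defensive.
Import Order.TTheory GRing.Theory Num.Theory.
Local Open Scope ring_scope.

Definition vset (R : realType) (n : nat) := 'rV[R]_n -> Prop.

Definition conv (R : realType) (n : nat) (V : seq 'rV[R]_n) : vset R n :=
  fun x => exists lam : 'I_(size V) -> R,
    (forall i, 0 <= lam i) /\ \sum_i lam i = 1 /\
    x = \sum_i lam i *: V`_i.

Definition simplex (R : realType) (n : nat) (S : {set 'I_n}) : vset R n :=
  conv [seq (delta_mx 0 s : 'rV[R]_n) | s <- enum S].

Definition msum2 (R : realType) (n : nat) (A B : vset R n) : vset R n :=
  fun x => exists a b, A a /\ B b /\ x = a + b.
Definition msum (R : realType) (n : nat) (Ps : seq (vset R n)) : vset R n :=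
  foldr (@msum2 R n) (fun x => x = 0) Ps.

Definition simple_graph (n : nat) (e : rel 'I_n) :=
  symmetric e /\ irreflexive e.
Definition graph_connected (n : nat) (e : rel 'I_n) :=
  forall x y, connect e x y.
Definition induced_connected (n : nat) (e : rel 'I_n) (S : {set 'I_n}) :=
  forall x y, x \in S -> y \in S ->
    connect [rel a b | [&& a \in S, b \in S & e a b]] x y.
(* Gamma|_S is isomorphic to the path graph L_{|S|} : some enumeration
   s_0, ..., s_{k-1} of S has s_i ~ s_j iff |i - j| = 1 *)
Definition induced_is_path (n : nat) (e : rel 'I_n) (S : {set 'I_n}) :=
  exists s : seq 'I_n, [/\ uniq s, (forall x, (x \in s) = (x \in S)) &
    forall i j : 'I_(size s),
      e (tnth (in_tuple s) i) (tnth (in_tuple s) j)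
      = (((i : nat).+1 == j) || ((j : nat).+1 == i))].

Definition dotv (R : realType) (n : nat) (w x : 'rV[R]_n) : R :=
  \sum_i w 0 i * x 0 i.

Definition ncone (R : realType) (n : nat) (P : vset R n) (x : 'rV[R]_n) : vset R n :=
  fun w => forall y, P y -> dotv w y <= dotv w x.

(* normal fan of P = { N_P(x) : x in P } (= normal cones of the nonempty faces);
   two polytopes are normally equivalent iff these collections of cones coincide *)
Definition normally_equivalent (R : realType) (n : nat) (P Q : vset R n) :=
  (forall x, P x -> exists y, Q y /\ forall w, ncone P x w <-> ncone Q y w) /\
  (forall y, Q y -> exists x, P x /\ forall w, ncone P x w <-> ncone Q y w).

Definition Qconn (R : realType) (n : nat) (e : rel 'I_n) (m : nat) : vset R n :=
  msum [seq @simplex R n T | T <- enum [set T : {set 'I_n} |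
    [&& T != set0, (#|T| <= m.+1)%N & `[< induced_connected e T >] ]]].

Definition Qpath (R : realType) (n : nat) (e : rel 'I_n) (m : nat) : vset R n :=
  msum [seq @simplex R n T | T <- enum [set T : {set 'I_n} |
    [&& T != set0, (#|T| <= m.+1)%N & `[< induced_is_path e T >] ]]].

From mathcomp Require Import all_boot all_order all_algebra boolp reals.
From mathcomp Require Import lra zify.
Set Implicit Arguments. Unset Strict Implicit. Unset Printing Implicit Defensive.
Import Order.TTheory GRing.Theory Num.Theory.

(* For a family F of nonempty subsets of [n], a point x of sum_(S in F) Delta_S
   is a sum of points x_S in Delta_S, and its normal cone consists of the w
   such that, for every S, each i in the support of x_S maximizes w_i over S.
   So the normal fan only sees the pairs {i, j} lying in a member of F: if each
   such pair lies in a member of G contained in it, and vice versa, the two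
   sums are normally equivalent.  Indeed, given x with normal cone C, preorder
   [n] by a >= b iff w_a >= w_b for all w in C and put on each T in G the
   barycentre of the top elements of T (they exist by the pair condition
   applied to T); the resulting point has normal cone C.  For i, j in S with
   Gamma|_S connected, a shortest i-j path in Gamma|_S has no chords, so it
   induces a path graph inside S: this is the pair condition between the
   connected and the path families. *)

Section PathShortcut.
Variables (T : Type) (r : rel T).

Lemma last_take_nth (x : T) p k : k <= size p -> last x (take k p) = nth x (x :: p) k.
Proof.
by elim: p x k => [|y p IH] x [|k] //= k_le; rewrite IH // (set_nth_default x).
Qed.

Lemma path_drop (x : T) p k : k <= size p -> path r x p -> path r (nth x (x :: p) k) (drop k p).
Proof.
by move=> k_le; rewrite -{1}(cat_take_drop k p) cat_path last_take_nth // => /andP [].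
Qed.

(* Positions [a] and [b] are counted in [x :: p]; the shortcut keeps the
   vertices up to position [a] and from position [b] on. *)
Lemma path_shortcut (x : T) p a b : a < b <= size p ->
  r (nth x (x :: p) a) (nth x (x :: p) b) -> path r x p ->
  path r x (take a p ++ drop b.-1 p).
Proof.
case: b => [|b] //= /andP [ab b_le] chord pxp; rewrite cat_path.
have take_path : path r x (take a p).
  by move: pxp; rewrite -{1}(cat_take_drop a p) cat_path => /andP [].
have a_le : a <= size p := ltnW (leq_trans ab b_le).
rewrite take_path (last_take_nth _ a_le) (drop_nth x b_le) /=.
by rewrite chord (path_drop b_le).
Qed.

Lemma last_shortcut (x : T) p a b : 0 < b <= size p ->
  last x (take a p ++ drop b.-1 p) = last x p.
Proof.
case: b => [|b] //= b_le; rewrite -[in RHS](cat_take_drop b p) !last_cat.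
by rewrite (drop_nth x b_le).
Qed.

End PathShortcut.

Lemma shortest_path_chordless (T : finType) (r : rel T) x y : connect r x y ->
  exists p, [/\ path r x p, uniq (x :: p), last x p = y &
    forall a b, a.+1 < b -> b <= size p -> ~~ r (nth x (x :: p) a) (nth x (x :: p) b)].
Proof.
move=> /connectP [p0 p0_path y_last].
pose good k := `[< exists p, [/\ size p = k, path r x p & last x p = y] >].
have good_p0 : good (size p0) by apply/asboolP; exists p0.
case: (ex_minnP (ex_intro good _ good_p0)) => k /asboolP [p [<- p_path p_last]] p_min.
case: (shortenP p_path) p_last => q q_path q_uniq q_sub q_last.
have q_size : size q <= size p by apply: uniq_leq_size q_sub; case/andP: q_uniq.
exists q; split=> // a b ab b_le; apply/negP => chord.
have b_pos : 0 < b <= size q by rewrite b_le andbT (leq_ltn_trans _ ab).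
have /p_min : good (size (take a q ++ drop b.-1 q)).
  apply/asboolP; exists (take a q ++ drop b.-1 q); split=> //.
    by apply: path_shortcut chord q_path; rewrite b_le andbT ltnW.
  by rewrite last_shortcut.
rewrite size_cat size_takel ?size_drop; lia.
Qed.

Section InducedPaths.
Variables (n : nat) (e : rel 'I_n).
Hypotheses (e_sym : symmetric e) (e_irr : irreflexive e).
Implicit Types (S T : {set 'I_n}).

Definition induced S : rel 'I_n := [rel a b | [&& a \in S, b \in S & e a b]].

Lemma induced_sym S : symmetric (induced S).
Proof. by move=> a b; rewrite /induced /= e_sym andbCA. Qed.

Lemma induced_path_connected S : induced_is_path e S -> induced_connected e S.
Proof.
move=> [[|s0 s] [_ s_S s_e]] x y xS yS.
  by have := s_S x; rewrite xS.
have [xs ys] : x \in s0 :: s /\ y \in s0 :: s by rewrite !s_S.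
have s_path : path (induced S) s0 s.
  apply/(pathP s0) => k k_lt.
  have k1 : k.+1 < size (s0 :: s) := k_lt; have k0 := ltnW k1.
  rewrite /induced /= -!s_S (mem_nth s0 k0) in_cons mem_nth ?orbT //=.
  by have := s_e (Ordinal k0) (Ordinal k1); rewrite !(tnth_nth s0) /= eqxx.
have [/(path_connect s_path) s0x /(path_connect s_path) s0y] := (xs, ys).
by apply: connect_trans s0y; rewrite (sym_connect_sym (induced_sym S)).
Qed.

Lemma induced_path_subset S x p : path (induced S) x p -> x \in S -> {subset x :: p <= S}.
Proof.
elim: p x => [|z p IH] x /=; first by move=> _ xS y /[!inE] /eqP ->.
by case/andP=> /and3P [_ zS _] zp xS y /[!in_cons] /predU1P [-> // | /(IH z zp zS)].
Qed.

Lemma chordless_induced_is_path S x p : path (induced S) x p -> uniq (x :: p) -> x \in S ->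
  (forall a b, a.+1 < b -> b <= size p -> ~~ induced S (nth x (x :: p) a) (nth x (x :: p) b)) ->
  induced_is_path e [set z in x :: p].
Proof.
move=> p_path p_uniq xS p_chordless; have p_S := induced_path_subset p_path xS.
exists (x :: p); split=> // [z | a b]; first by rewrite in_set.
rewrite !(tnth_nth x) /=; set v := nth x (x :: p).
have no_chord k l : k.+1 < l -> l < size (x :: p) -> ~~ e (v k) (v l).
  move=> kl l_lt; apply: contraNN (p_chordless k l kl l_lt) => ekl.
  have k_lt : k < size (x :: p) by lia.
  by rewrite /induced /= ekl !p_S ?mem_nth.
have edge k : k.+1 < size (x :: p) -> e (v k) (v k.+1).
  by move=> k_lt; move/(pathP x): p_path => /(_ k k_lt) /and3P [_ _].
have [ab | ba | /val_inj ->] := ltngtP a b; last by rewrite e_irr gtn_eqF.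
- apply/idP/idP => [eab | /orP [/eqP ab1 | /eqP ba]].
  + apply/orP; left; rewrite eqn_leq ab leqNgt /=.
    by apply: contraL eab => /no_chord; exact.
  + by rewrite -ab1; apply: edge; rewrite ab1.
  + by rewrite -ba ltnNge leqnSn in ab.
- apply/idP/idP => [eab | /orP [/eqP ab | /eqP ba1]].
  + apply/orP; right; rewrite eqn_leq ba leqNgt /=.
    by apply: contraL eab => /no_chord; rewrite e_sym; exact.
  + by rewrite -ab ltnNge leqnSn in ba.
  + by rewrite e_sym -ba1; apply: edge; rewrite ba1.
Qed.

Lemma induced_path_through S i j : induced_connected e S -> i \in S -> j \in S ->
  exists T, [/\ T \subset S, i \in T, j \in T & induced_is_path e T].
Proof.
move=> S_conn iS jS.
have [p [p_path p_uniq p_last p_chordless]] := shortest_path_chordless (S_conn i j iS jS).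
exists [set z in i :: p]; split.
- by apply/subsetP => z; rewrite inE; apply: induced_path_subset p_path iS z.
- by rewrite inE mem_head.
- by rewrite inE -p_last mem_last.
- exact: (chordless_induced_is_path (S := S) p_path p_uniq iS p_chordless).
Qed.
End InducedPaths.

Local Open Scope ring_scope.

Section DotProduct.
Variables (R : realType) (n : nat).
Implicit Types (x y w : 'rV[R]_n).

Lemma dotvD w x y : dotv w (x + y) = dotv w x + dotv w y.
Proof. by rewrite /dotv -big_split; apply: eq_bigr => i _; rewrite mxE mulrDr. Qed.

Lemma dotvZ w c x : dotv w (c *: x) = c * dotv w x.
Proof. by rewrite /dotv mulr_sumr; apply: eq_bigr => i _; rewrite mxE mulrCA. Qed.

Lemma dotvB w x y : dotv w (x - y) = dotv w x - dotv w y.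
Proof. by rewrite dotvD -scaleN1r dotvZ mulN1r. Qed.

Lemma dotv_delta w (a : 'I_n) : dotv w (delta_mx 0 a) = w 0 a.
Proof.
rewrite /dotv (bigD1 a) //= mxE !eqxx mulr1 big1 ?addr0 // => i /negbTE ne.
by rewrite mxE eqxx ne mulr0.
Qed.

Lemma sum_coordE x : \sum_i x 0 i = dotv (const_mx 1) x.
Proof. by apply: eq_bigr => i _; rewrite mxE mul1r. Qed.

End DotProduct.

Section MinkowskiSum.
Variables (R : realType) (n : nat).

Lemma ncone_msum2 (A B : vset R n) a b w : A a -> B b ->
  ncone (msum2 A B) (a + b) w <-> ncone A a w /\ ncone B b w.
Proof.
move=> Aa Bb; split=> [Nw | [NAw NBw] _ [a' [b' [Aa' [Bb' ->]]]]].
- split=> y Py.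
  + by rewrite -(lerD2r (dotv w b)) -!dotvD; apply: Nw; exists y, b.
  + by rewrite -(lerD2l (dotv w a)) -!dotvD; apply: Nw; exists a, y.
- by rewrite !dotvD; apply: lerD; [apply: NAw | apply: NBw].
Qed.

Variables (I : eqType) (A : I -> vset R n).

Lemma msum_sum (Ts : seq I) (pt : I -> 'rV[R]_n) :
  (forall T, T \in Ts -> A T (pt T)) ->
  msum [seq A T | T <- Ts] (\sum_(T <- Ts) pt T).
Proof.
elim: Ts => [|T Ts IH] Apt; first by rewrite big_nil.
rewrite big_cons; exists (pt T), (\sum_(S <- Ts) pt S); split; last split=> //.
  exact/Apt/mem_head.
by apply: IH => S S_Ts; apply/Apt; rewrite in_cons S_Ts orbT.
Qed.

Lemma ncone_msum (Ts : seq I) (pt : I -> 'rV[R]_n) w :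
  (forall T, T \in Ts -> A T (pt T)) ->
  ncone (msum [seq A T | T <- Ts]) (\sum_(T <- Ts) pt T) w <->
  (forall T, T \in Ts -> ncone (A T) (pt T) w).
Proof.
elim: Ts => [|T Ts IH] Apt.
  by rewrite big_nil; split=> // _ y ->; apply: lexx.
have Apt' S : S \in Ts -> A S (pt S) by move=> S_Ts; apply/Apt; rewrite in_cons S_Ts orbT.
rewrite big_cons /= ncone_msum2 ?IH //; last exact: msum_sum.
  split=> [[NT NTs] S | Nw]; first by rewrite in_cons => /predU1P [-> | /NTs].
  by split=> [|S S_Ts]; apply: Nw; rewrite ?mem_head // in_cons S_Ts orbT.
exact/Apt/mem_head.
Qed.

Lemma msum_decomp (Ts : seq I) x : uniq Ts -> msum [seq A T | T <- Ts] x ->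
  exists2 pt : I -> 'rV[R]_n,
    (forall T, T \in Ts -> A T (pt T)) & x = \sum_(T <- Ts) pt T.
Proof.
elim: Ts x => [|T Ts IH] x /=.
  by move=> _ ->; exists (fun=> 0); rewrite ?big_nil.
move=> /andP [T_Ts uTs] [a [b [Aa [Ab ->]]]].
have [pt Apt ->] := IH b uTs Ab.
exists (fun S => if S == T then a else pt S).
  by move=> S; rewrite in_cons; case: eqP => [-> | _] //= /Apt.
rewrite big_cons eqxx; congr (_ + _); apply: eq_big_seq => S S_Ts.
by case: eqP => // eST; rewrite -eST S_Ts in T_Ts.
Qed.

End MinkowskiSum.

Section Simplex.
Variables (R : realType) (n : nat).
Implicit Types (T : {set 'I_n}) (x w : 'rV[R]_n).

Lemma simplexP T x : simplex T x <->
  [/\ forall i, 0 <= x 0 i, forall i, i \notin T -> x 0 i = 0 & \sum_i x 0 i = 1].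
Proof.
rewrite /simplex /conv; set V := [seq delta_mx 0 s | s <- enum T].
have V_delta (k : 'I_(size V)) : exists2 a, a \in T & V`_k = delta_mx 0 a.
  by have /mapP [a] := mem_nth 0 (ltn_ord k); rewrite mem_enum => aT ->; exists a.
have sum_nthV (U : nmodType) (F : 'rV[R]_n -> U) :
    \sum_(k < size V) F V`_k = \sum_i (if i \in T then F (delta_mx 0 i) else 0).
  rewrite -(big_mkord xpredT (F \o nth 0 V)) -(big_nth 0 xpredT F).
  by rewrite big_map big_enum -big_mkcond.
split=> [[lam [lam_ge0 [lam_sum1 ->]]] | [x_ge0 x_out x_sum1]].
- have coord i : (\sum_k lam k *: V`_k) 0 i = \sum_k lam k * V`_k 0 i.
    by rewrite summxE; apply: eq_bigr => k _; rewrite mxE.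
  split=> [i | i iT |].
  + rewrite coord; apply: sumr_ge0 => k _; apply: mulr_ge0 => //.
    by have [a _ ->] := V_delta k; rewrite mxE ler0n.
  + rewrite coord big1 // => k _; have [a aT ->] := V_delta k.
    have /negbTE ia : i != a by apply: contraNneq iT => ->.
    by rewrite mxE eqxx ia mulr0.
  + under eq_bigr do rewrite coord.
    rewrite exchange_big /= -lam_sum1; apply: eq_bigr => k _.
    have [a _ ->] := V_delta k.
    by rewrite -mulr_sumr sum_coordE dotv_delta mxE mulr1.
- have x_restr i : (if i \in T then x 0 i else 0) = x 0 i.
    by case: ifPn => // /x_out.
  exists (fun k => dotv x V`_k); split=> [k | ].
    by have [a _ ->] := V_delta k; rewrite dotv_delta.
  split.
    rewrite (sum_nthV _ (dotv x)) -x_sum1.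
    by apply: eq_bigr => i _; rewrite dotv_delta x_restr.
  rewrite (sum_nthV _ (fun v => dotv x v *: v)) [LHS]row_sum_delta; apply: eq_bigr => i _.
  by rewrite dotv_delta -x_restr; case: ifP; rewrite ?scale0r.
Qed.

Lemma simplex_supp T x i : simplex T x -> 0 < x 0 i -> i \in T.
Proof. by case/simplexP=> _ x_out _; apply: contraTT => /x_out ->; rewrite ltxx. Qed.

Lemma simplex_supp_neq0 T x : simplex T x -> exists2 k, 0 < x 0 k & k \in T.
Proof.
move=> Tx; have /simplexP [x_ge0 _ x_sum1] := Tx.
have [k xk_gt0 | x_le0] := pickP (fun i => 0 < x 0 i).
  by exists k => //; apply: simplex_supp xk_gt0.
suff : \sum_i x 0 i = 0 by rewrite x_sum1 => /eqP; rewrite oner_eq0.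
by apply: big1 => i _; apply/eqP; rewrite eq_le x_ge0 andbT leNgt x_le0.
Qed.

Lemma ncone_simplex T x w : simplex T x ->
  ncone (simplex T) x w <-> forall i j, 0 < x 0 i -> j \in T -> w 0 j <= w 0 i.
Proof.
move=> Tx; have /simplexP [x_ge0 x_out x_sum1] := Tx.
split=> [Nw i j xi_gt0 jT | w_max y /simplexP [y_ge0 y_out y_sum1]].
- have iT := simplex_supp Tx xi_gt0.
  pose y := x + x 0 i *: (delta_mx 0 j - delta_mx 0 i).
  have Ty : simplex T y.
    apply/simplexP; split=> [k | k kT |].
    + rewrite !mxE /=; have := x_ge0 k; have := x_ge0 i.
      by case: (eqVneq k i) => [->|_]; case: (k == j); case: (i == j) => /=; lra.
    + have /negbTE kj : k != j by apply: contraNneq kT => ->.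
      have /negbTE ki : k != i by apply: contraNneq kT => ->.
      by rewrite !mxE /= kj ki x_out // subrr mulr0 addr0.
    + rewrite sum_coordE dotvD dotvZ dotvB !dotv_delta !mxE -sum_coordE x_sum1.
      by rewrite subrr mulr0 addr0.
  have := Nw y Ty; rewrite /y dotvD dotvZ dotvB !dotv_delta gerDl.
  by rewrite pmulr_rle0 // subr_le0.
- have [k xk_gt0 kT] := simplex_supp_neq0 Tx.
  have dotv_x : dotv w x = w 0 k.
    rewrite /dotv -[w 0 k]mulr1 -x_sum1 mulr_sumr; apply: eq_bigr => i _.
    have [xi_gt0 | xi_le0] := ltP 0 (x 0 i); last first.
      by rewrite [x 0 i](@le_anti _ _ _ 0) ?xi_le0 ?x_ge0 ?mulr0.
    have iT := simplex_supp Tx xi_gt0.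
    by rewrite [w 0 i](@le_anti _ _ _ (w 0 k)) ?w_max.
  rewrite dotv_x -[w 0 k]mulr1 -y_sum1 mulr_sumr /dotv; apply: ler_sum => i _.
  have [iT | /y_out ->] := boolP (i \in T); last by rewrite !mulr0.
  by apply: ler_wpM2r => //; apply: w_max.
Qed.

End Simplex.

Lemma exists_maximal (T : finType) (A : {set T}) (le : T -> T -> Prop) :
  A != set0 -> (forall a, le a a) -> (forall a b c, le a b -> le b c -> le a c) ->
  exists2 a, a \in A & forall b, b \in A -> le a b -> le b a.
Proof.
move=> /set0Pn [a0 a0A] le_refl le_trans.
pose down a := [set c in A | `[< le c a >]].
have [a aA a_max] := arg_maxnP (fun a => #|down a|) a0A.
exists a => // b bA le_ab.
have down_ab : down a \subset down b.
  apply/subsetP => c; rewrite !inE => /andP [-> /asboolP le_ca] /=.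
  exact/asboolP/(le_trans _ _ _ le_ca le_ab).
have down_ba : down a = down b by apply/eqP; rewrite eqEcard down_ab; apply: a_max.
have : b \in down a by rewrite down_ba !inE bA; apply/asboolP/le_refl.
by rewrite inE => /andP [_ /asboolP].
Qed.

Section SimplexSums.
Variables (R : realType) (n : nat).
Implicit Types (Fs Gs : seq {set 'I_n}) (S T V : {set 'I_n}).

Definition simplex_sum Fs : vset R n := msum [seq simplex T | T <- Fs].

Definition pair_refinement Fs Gs := forall S, S \in Fs -> forall i j, i \in S -> j \in S ->
  exists T, [/\ T \in Gs, i \in T, j \in T & T \subset S].

Lemma pair_refinement_subset Fs Gs : {subset Fs <= Gs} -> pair_refinement Fs Gs.
Proof. by move=> FG S S_Fs i j iS jS; exists S; split; rewrite ?FG. Qed.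

Lemma ncone_simplex_sum Fs (pt : {set 'I_n} -> 'rV[R]_n) w :
  (forall S, S \in Fs -> simplex S (pt S)) ->
  ncone (simplex_sum Fs) (\sum_(S <- Fs) pt S) w <->
  forall S, S \in Fs -> forall i j, 0 < pt S 0 i -> j \in S -> w 0 j <= w 0 i.
Proof.
move=> Spt; rewrite ncone_msum //.
by split=> Nw S S_Fs; apply/(ncone_simplex _ (Spt S S_Fs))/Nw.
Qed.

Definition barycenter V : 'rV[R]_n := \row_i (if i \in V then #|V|%:R^-1 else 0).

Lemma barycenter_gt0 V i : (0 < barycenter V 0 i) = (i \in V).
Proof.
rewrite mxE; case: ifP => [iV | _]; last by rewrite ltxx.
by rewrite invr_gt0 ltr0n card_gt0; apply/set0Pn; exists i.
Qed.

Lemma simplex_barycenter T V : V != set0 -> V \subset T -> simplex T (barycenter V).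
Proof.
move=> V_neq0 VT; apply/simplexP; split=> [i | i iT |].
- by rewrite mxE; case: ifP; rewrite ?invr_ge0 ?ler0n.
- by rewrite mxE; case: ifPn => // iV; rewrite (subsetP VT i iV) in iT.
- under eq_bigr do rewrite mxE.
  rewrite -big_mkcond /= sumr_const -[_ *+ _]mulr_natr mulVf //.
  by rewrite pnatr_eq0 -lt0n card_gt0.
Qed.

Section Transfer.
Variables (Fs Gs : seq {set 'I_n}) (pt : {set 'I_n} -> 'rV[R]_n).
Hypotheses (Gs_neq0 : forall T, T \in Gs -> T != set0)
  (refFG : pair_refinement Fs Gs) (refGF : pair_refinement Gs Fs)
  (pt_simplex : forall S, S \in Fs -> simplex S (pt S)).

(* The normal cone of [simplex_sum Fs] at [\sum_(S <- Fs) pt S], by [ncone_simplex_sum]. *)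
Let cone (w : 'rV[R]_n) :=
  forall S, S \in Fs -> forall i j, 0 < pt S 0 i -> j \in S -> w 0 j <= w 0 i.
Let dominates a b := forall w, cone w -> w 0 b <= w 0 a.
Let top T := [set a in T | `[< forall b, b \in T -> dominates a b >]].

Lemma top_neq0 T : T \in Gs -> top T != set0.
Proof.
move=> T_Gs.
have [a aT a_max] : exists2 a, a \in T & forall b, b \in T -> dominates b a -> dominates a b.
  apply: exists_maximal (Gs_neq0 T_Gs) _ _ => [a w _ | a b c ab bc w Cw] //.
  exact: le_trans (ab w Cw) (bc w Cw).
apply/set0Pn; exists a; rewrite inE aT; apply/asboolP => b bT.
have [S [S_Fs aS bS ST]] := refGF T_Gs aT bT.
have [k ptk_gt0 kS] := simplex_supp_neq0 (pt_simplex S_Fs).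
have k_dom c : c \in S -> dominates k c by move=> cS w Cw; apply: Cw ptk_gt0 cS.
have ak := a_max k (subsetP ST k kS) (k_dom a aS).
by move=> w Cw; apply: le_trans (k_dom b bS w Cw) (ak w Cw).
Qed.

Lemma ncone_simplex_sum_transfer : exists y, simplex_sum Gs y /\
  forall w, ncone (simplex_sum Fs) (\sum_(S <- Fs) pt S) w <-> ncone (simplex_sum Gs) y w.
Proof.
have bary_simplex T : T \in Gs -> simplex T (barycenter (top T)).
  by move=> T_Gs; apply: simplex_barycenter (top_neq0 T_Gs) _; apply/subsetP => a /setIdP [].
exists (\sum_(T <- Gs) barycenter (top T)); split; first exact: msum_sum.
move=> w; rewrite !ncone_simplex_sum //.
split=> [Cw T T_Gs i j | Nw S S_Fs i j ptSi_gt0 jS].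
  by rewrite barycenter_gt0 inE => /andP [_ /asboolP i_top] /i_top; apply.
have [T [T_Gs iT jT TS]] := refFG S_Fs (simplex_supp (pt_simplex S_Fs) ptSi_gt0) jS.
apply: Nw T_Gs _ _ _ jT; rewrite barycenter_gt0 inE iT; apply/asboolP => b bT w' Cw'.
exact: Cw' S_Fs _ _ ptSi_gt0 (subsetP TS b bT).
Qed.

End Transfer.

Lemma simplex_sum_transfer Fs Gs : uniq Fs -> (forall T, T \in Gs -> T != set0) ->
  pair_refinement Fs Gs -> pair_refinement Gs Fs ->
  forall x, simplex_sum Fs x -> exists y, simplex_sum Gs y /\
    forall w, ncone (simplex_sum Fs) x w <-> ncone (simplex_sum Gs) y w.
Proof.
move=> uFs Gs_neq0 refFG refGF x /(msum_decomp uFs) [pt pt_simplex ->].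
exact: ncone_simplex_sum_transfer.
Qed.

Lemma simplex_sums_normally_equivalent Fs Gs : uniq Fs -> uniq Gs ->
  (forall S, S \in Fs -> S != set0) -> (forall T, T \in Gs -> T != set0) ->
  pair_refinement Fs Gs -> pair_refinement Gs Fs ->
  normally_equivalent (simplex_sum Fs) (simplex_sum Gs).
Proof.
move=> uFs uGs Fs_neq0 Gs_neq0 refFG refGF; split=> [x Fx | y Gy].
  exact: simplex_sum_transfer Fx.
have [x [Fx NyNx]] := simplex_sum_transfer uGs Fs_neq0 refGF refFG Gy.
by exists x; split=> // w; apply: iff_sym.
Qed.

End SimplexSums.

Theorem mainTheorem6 (R : realType) (n : nat) (e : rel 'I_n) (m : nat) :
  simple_graph e -> graph_connected e -> (0 < m)%N ->
  normally_equivalent (@Qconn R n e m) (@Qpath R n e m).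
Proof.
move=> [e_sym e_irr] _ _.
apply: simplex_sums_normally_equivalent; rewrite ?enum_uniq //.
- by move=> S; rewrite mem_enum inE => /and3P [].
- by move=> T; rewrite mem_enum inE => /and3P [].
- move=> S; rewrite mem_enum inE => /and3P [_ S_le /asboolP S_conn] i j iS jS.
  have [T [TS iT jT T_path]] := induced_path_through e_sym e_irr S_conn iS jS.
  exists T; split=> //; rewrite mem_enum inE (leq_trans (subset_leq_card TS) S_le) /=.
  by apply/andP; split; [apply/set0Pn; exists i | apply/asboolP].
- apply: pair_refinement_subset => T; rewrite !mem_enum !inE.
  by case/and3P=> -> -> /asboolP T_path; apply/asboolP/induced_path_connected.
Qed.
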